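(* Let $k\ge 2$ be an integer, let $x>0$ be real, and let $M_0\ge 6$ be an integer. Let $M=M(x,k)$ be the nonnegative integer satisfying $$2^k+3^k+\cdots+p_M^k\le x<2^k+3^k+\cdots+p_M^k+p_{M+1}^k .$$ If $M\ge M_0$, then $$\log M<\frac{\log x}{k+1}\cdot\frac{1}{A(M_0)}\qquad\text{and}\qquad \log M\ge \frac{\log x}{k+1}\cdot\frac{1}{B(M_0,k)}.$$
   Context: $p_n$ denotes the $n$th prime, with $p_1=2$. For $y\ge 6$ define $A(y)=\frac{\log(y/2)}{\log y}$ and $B(y,k)=\frac{\log(y+1)}{\log y}+\frac{\log\log\left((y+1)^2\right)}{\log y}\cdot\frac{k}{k+1}$. *)

From mathcomp Require Import ssreflect ssrfun ssrbool eqtype ssrnat prime.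
From Stdlib Require Import Reals.

Definition next_prime (m : nat) : nat :=
  ex_minn (let: exist2 q H1 H2 := prime_above m in
           ex_intro (fun q => (m < q) && prime q) q (introT andP (conj H1 H2))).

(* 0-indexed primes: prime0 0 = 2, prime0 1 = 3, ... *)
Fixpoint prime0 (n : nat) : nat :=
  match n with
  | 0 => 2
  | S n' => next_prime (prime0 n')
  end.

(* p n = p_n, the n-th prime with p_1 = 2 (p 0 is a junk value, never used) *)
Definition p (n : nat) : nat := prime0 n.-1.

Open Scope R_scope.

Fixpoint psum (k M : nat) : R :=
  match M with
  | O => 0
  | S M' => psum k M' + (INR (p (S M'))) ^ k
  end.

Definition A (y : R) : R := ln (y / 2) / ln y.

Definition B (y : R) (k : nat) : R :=
  ln (y + 1) / ln y
  + ln (ln ((y + 1) ^ 2)) / ln y * (INR k / (INR k + 1)).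

(* Since p_i >= i + 1, psum k M >= M^(k+1)/(k+1) > (M/2)^(k+1), and
   A(M0) log M <= log(M/2) once M >= M0; this is the upper bound.
   Conversely x < psum k (M+1) <= (M+1) p_(M+1)^k, and p_n <= 2 n log n for
   n >= 7, so log x <= log((M+1) (2 (M+1) log(M+1))^k).  As log(y+1)/log y and
   log log((y+1)^2)/log y decrease in y, the right-hand side is at most
   (k+1) B(M0,k) log M.  The prime bound is checked by computation for
   n < 2048; beyond, the central binomial coefficient gives Chebyshev's
   estimate 4^m <= (2m+1) (2m)^pi(2m), which for m = floor(n log n) forces
   pi(2m) >= n. *)

From Stdlib Require Import Reals Lra ZArith NArith.
From Coquelicot Require Import Rcomplements.
From mathcomp Require Import ssreflect ssrfun ssrbool eqtype ssrnat seq path div.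
From mathcomp Require Import prime bigop binomial zify.

Local Open Scope nat_scope.

Lemma next_primeP m :
  [/\ m < next_prime m, prime (next_prime m) &
      forall q, m < q -> prime q -> next_prime m <= q].
Proof.
rewrite /next_prime; case: ex_minnP => q /andP[mq pq] qmin.
by split=> // r mr pr; apply: qmin; rewrite mr pr.
Qed.

Lemma prime0_ltS n : prime0 n < prime0 n.+1.
Proof. by case: (next_primeP (prime0 n)). Qed.

Lemma prime0_leq : {homo prime0 : i j / i <= j}.
Proof. exact/ltnW_homo/(homo_ltn ltn_trans prime0_ltS). Qed.

Lemma prime0_geq n : n.+2 <= prime0 n.
Proof. by elim: n => // n IH; apply: leq_ltn_trans IH (prime0_ltS n). Qed.

Lemma prime0S_leq n q : prime0 n < q -> prime q -> prime0 n.+1 <= q.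
Proof. by case: (next_primeP (prime0 n)) => _ _; apply. Qed.

Lemma prime0_le_nth s i :
  sorted ltn s -> all prime s -> i < size s -> prime0 i <= nth 0 s i.
Proof.
move=> s_sorted /(all_nthP 0) s_prime; elim: i => [|i IH] lt_is.
  exact/prime_gt1/s_prime.
apply: prime0S_leq; last exact: s_prime.
apply: leq_ltn_trans (IH (ltnW lt_is)) _.
by apply: (sorted_ltn_nth ltn_trans) => //; rewrite inE ltnW.
Qed.

Lemma prime0_le_of_count n a : n < count prime (iota 0 a.+1) -> prime0 n <= a.
Proof.
rewrite -size_filter => lt_n.
have s_sorted := sorted_filter ltn_trans prime (iota_ltn_sorted 0 a.+1).
apply: leq_trans (prime0_le_nth _ _ s_sorted (filter_all _ _) lt_n) _.
by move: (mem_nth 0 lt_n); rewrite mem_filter mem_iota add0n ltnS => /andP[_].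
Qed.

(** * Checking small primes by computation *)

Section SmallPrimes.
Local Open Scope N_scope.

Fixpoint trial_div (q d : N) (fuel : nat) : bool :=
  match fuel with
  | O => false
  | S f => if q <? d * d then true
           else if q mod d =? 0 then false
           else trial_div q (N.succ d) f
  end.

Definition primeN (q : N) : bool := (2 <=? q) && trial_div q 2 200.

(* [i] primes have been certified below the candidate [c].  A prime [c] of
   index [n = i + 1] in [7, 2047] must satisfy [3 c <= 4 n log2 n], which
   implies [c <= 2 n ln n] because [ln 2 >= 2/3]. *)
Fixpoint scan (fuel : nat) (c i : N) : bool :=
  match fuel with
  | O => 2047 <=? i
  | S f =>
      if primeN c then
        ((N.succ i <? 7) || (3 * c <=? 4 * N.succ i * N.log2 (N.succ i)))
        && scan f (N.succ c) (N.succ i)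
      else scan f (N.succ c) i
  end.

End SmallPrimes.

Lemma scan_ok : scan 17900 0 0.
Proof. by vm_compute. Qed.

Lemma trial_div_sound q d fuel : trial_div q d fuel -> (1 <= d)%num ->
  forall e, (d <= e)%num -> (e * e <= q)%num -> (q mod e <> 0)%num.
Proof.
elim: fuel d => [|f IH] d //=.
case: N.ltb_spec => [lt_q_dd _ _ e le_de le_eeq|_]; first nia.
case: N.eqb_spec => // q_mod_d /IH IHd d_ge1 e le_de le_eeq.
have [<- //|ne_de] := N.eq_dec d e.
by apply: IHd => //; lia.
Qed.

Lemma primeN_sound q : primeN q -> prime (N.to_nat q).
Proof.
case/andP => /N.leb_le q_ge2 q_trial.
apply: contraT => /primePns[|[r [r_prime r2_le r_dvd]]]; first lia.
have r_gt1 := prime_gt1 r_prime; case/dvdnP: r_dvd => s q_eq.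
have r_mod : (q mod N.of_nat r = 0)%num.
  by rewrite -[q]N2Nat.id q_eq Nat2N.inj_mul N.Div0.mod_mul.
have := trial_div_sound _ _ _ q_trial ltac:(lia) (N.of_nat r).
by case/(_ ltac:(lia) ltac:(lia) r_mod).
Qed.

Lemma Nat_powE m n : Nat.pow m n = m ^ n.
Proof. by elim: n => // n IH; rewrite expnS -IH. Qed.

Lemma trunc_log2_N2Nat a : trunc_log 2 (N.to_nat a) = N.to_nat (N.log2 a).
Proof.
have [->|a_gt0] := N.eq_dec a 0; first by rewrite trunc_log0.
have [lo hi] := N.log2_spec a ltac:(lia).
apply: trunc_log_eq => //; rewrite -!Nat_powE -[2]/(N.to_nat 2).
apply/andP; split; [apply/leP | apply/ltP];
  by rewrite -?N2Nat.inj_succ -N2Nat.inj_pow; lia.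
Qed.

Lemma scan_sound fuel c i : scan fuel c i ->
  (forall q, prime q -> N.to_nat c <= q -> prime0 (N.to_nat i) <= q) ->
  forall n, N.to_nat i < n <= 2047 -> 6 < n ->
  3 * prime0 n.-1 <= 4 * n * trunc_log 2 n.
Proof.
elim: fuel c i => [|f IH] c i; cbn [scan]; first by move=> /N.leb_le ? _ n; lia.
case: ifP => [/primeN_sound c_prime /andP[c_ok scan_f] | _ scan_f] inv n n_range n_gt6.
  have le_ic : prime0 (N.to_nat i) <= N.to_nat c by apply: inv.
  have [n_eq|n_ne] := eqVneq n (N.to_nat (N.succ i)).
    case/orP: c_ok => [/N.ltb_lt ?|/N.leb_le c_ok]; first lia.
    rewrite n_eq trunc_log2_N2Nat [in prime0 _]N2Nat.inj_succ succnK; nia.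
  apply: (IH _ _ scan_f); try lia.
  move=> q q_prime; rewrite !N2Nat.inj_succ => lt_cq.
  by apply: prime0S_leq q_prime; lia.
apply: (IH _ _ scan_f); try lia.
by move=> q q_prime; rewrite N2Nat.inj_succ => lt_cq; apply: inv; lia.
Qed.

Lemma p_le_log2_small n : 6 < n <= 2047 -> 3 * p n <= 4 * n * trunc_log 2 n.
Proof.
case/andP=> n_gt6 n_le; apply: (scan_sound _ _ _ scan_ok) => //; last lia.
by move=> q /prime_gt1.
Qed.

(** * Chebyshev's bound via the central binomial coefficient *)

Lemma central_binS m : 'C(m.+1.*2, m.+1) * m.+1 = 2 * m.*2.+1 * 'C(m.*2, m).
Proof.
have sym : 'C(m.*2.+1, m.+1) = 'C(m.*2.+1, m).
  by rewrite -bin_sub; [congr 'C(_, _) | ]; lia.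
have := mul_bin_down m.*2.+1 m.
by rewrite doubleS binS sym /=; nia.
Qed.

Lemma four_pow_le_central_bin m : 4 ^ m <= m.*2.+1 * 'C(m.*2, m).
Proof.
elim: m => // m IH.
rewrite -(leq_pmul2r (ltn0Sn m)) -mulnA central_binS expnS.
have := leq_mul (leqnn (2 * m.+1.*2.+1)) IH.
move: (4 ^ m) ('C(m.*2, m)) => P C; nia.
Qed.

Lemma logn_fact_widen q n N : prime q -> n <= N ->
  logn q n`! = \sum_(1 <= k < N.+1) n %/ q ^ k.
Proof.
move=> q_prime le_nN; rewrite logn_fact // [RHS](big_cat_nat (n := n.+1)) //=.
rewrite [X in _ = _ + X]big_nat_cond [X in _ = _ + X]big1 ?addn0 //.
move=> k /andP[/andP[lt_nk _] _].
by rewrite divn_small // (leq_trans lt_nk) // ltnW // ltn_expl // prime_gt1.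
Qed.

Lemma sum_leq_minn T n : \sum_(1 <= k < n.+1) (k <= T) <= minn n T.
Proof.
elim: n => [|n IH]; first by rewrite big_geq.
by rewrite big_nat_recr //=; case: (leqP n.+1 T) => _ /=; lia.
Qed.

Lemma logn_central_bin_le q m : prime q -> logn q 'C(m.*2, m) <= trunc_log q m.*2.
Proof.
move=> q_prime; set T := trunc_log q m.*2.
have le_m2m : m <= m.*2 by rewrite -addnn leq_addr.
have fact_eq : logn q (m.*2)`! = logn q 'C(m.*2, m) + (logn q m`! + logn q m`!).
  rewrite -(bin_fact le_m2m) (_ : m.*2 - m = m); last lia.
  by rewrite !lognM ?muln_gt0 ?bin_gt0 ?fact_gt0.
have term_le k : m.*2 %/ q ^ k <= m %/ q ^ k + m %/ q ^ k + (k <= T).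
  case: (leqP k T) => [_|lt_Tk]; first by rewrite -addnn leq_divDl.
  rewrite divn_small // (leq_trans (trunc_log_ltn _ (prime_gt1 q_prime))) //.
  by rewrite leq_pexp2l ?prime_gt0.
have : \sum_(1 <= k < m.*2.+1) m.*2 %/ q ^ k <=
       \sum_(1 <= k < m.*2.+1) (m %/ q ^ k + m %/ q ^ k + (k <= T)).
  by apply: leq_sum => k _; apply: term_le.
rewrite !big_split /= -!(logn_fact_widen _ _ _ q_prime le_m2m) -logn_fact //.
by have := sum_leq_minn T m.*2; lia.
Qed.

Lemma pfactor_central_bin_le q m : prime q -> 0 < m ->
  q ^ logn q 'C(m.*2, m) <= m.*2.
Proof.
move=> q_prime m_gt0; apply: leq_trans (trunc_logP (prime_gt1 q_prime) _); last lia.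
by rewrite leq_pexp2l ?prime_gt0 ?logn_central_bin_le.
Qed.

Lemma prod_leq_pow (s : seq nat) (F : nat -> nat) c :
  {in s, forall x, F x <= c} -> \prod_(x <- s) F x <= c ^ size s.
Proof.
elim: s => [|x s IH] le_Fc; first by rewrite big_nil.
rewrite big_cons expnS leq_mul ?le_Fc ?mem_head // IH // => y s_y.
by rewrite le_Fc // inE s_y orbT.
Qed.

Lemma central_bin_le_pow m : 0 < m ->
  'C(m.*2, m) <= m.*2 ^ count prime (iota 0 m.*2.+1).
Proof.
move=> m_gt0; have C_gt0 : 0 < 'C(m.*2, m) by rewrite bin_gt0; lia.
rewrite {1}(prod_prime_decomp C_gt0) prime_decompE big_map /=.
apply: leq_trans (@prod_leq_pow _ _ m.*2 _) _.
  by move=> q; rewrite mem_primes => /and3P[q_prime _ _]; apply: pfactor_central_bin_le.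
rewrite leq_pexp2l ?double_gt0 // -size_filter uniq_leq_size ?primes_uniq // => q q_C.
move: (q_C); rewrite mem_primes => /and3P[q_prime _ _].
rewrite mem_filter mem_iota q_prime prime_gt0 //= ltnS.
apply: leq_trans (pfactor_central_bin_le _ _ q_prime m_gt0).
by rewrite -[leqLHS]expn1 leq_pexp2l ?(prime_gt0 q_prime) // logn_gt0.
Qed.

Lemma four_pow_le_prime_count m : 0 < m ->
  4 ^ m <= m.*2.+1 * m.*2 ^ count prime (iota 0 m.*2.+1).
Proof.
move=> m_gt0; apply: leq_trans (four_pow_le_central_bin m) _.
by rewrite leq_mul2l central_bin_le_pow ?orbT.
Qed.

(** * The bound p_n <= 2 n log n *)

Local Open Scope R_scope.

Lemma INR_leq a b : (a <= b)%N -> INR a <= INR b.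
Proof. by move/leP; apply: le_INR. Qed.

Lemma INR_IZR_leq c n : (c <= n)%N -> IZR (Z.of_nat c) <= INR n.
Proof. by rewrite -INR_IZR_INZ; apply: INR_leq. Qed.

Lemma INR_muln a b : INR (a * b) = INR a * INR b.
Proof. exact: mult_INR. Qed.

Lemma INR_expn a n : INR (a ^ n) = INR a ^ n.
Proof. by elim: n => // n IH; rewrite expnS INR_muln IH. Qed.

Lemma INR_double a : INR a.*2 = 2 * INR a.
Proof. by rewrite -muln2 INR_muln /=; lra. Qed.

Lemma ln_le_sub1 x : 0 < x -> ln x <= x - 1.
Proof. by move=> x_gt0; have := exp_ineq1_le (ln x); rewrite exp_ln //; lra. Qed.

Lemma ln2_ge : 17 / 25 <= ln 2.
Proof.
have ln_base : ln (783 / 800) <= - (17 / 800) by have := ln_le_sub1 (783 / 800); lra.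
have := ln_le (/ 2) ((783 / 800) ^ 32) ltac:(lra) ltac:(lra).
by rewrite ln_Rinv ?ln_pow /=; lra.
Qed.

Lemma ln_gt0 x : 1 < x -> 0 < ln x.
Proof. by move=> x_gt1; rewrite -ln_1; apply: ln_increasing; lra. Qed.

Lemma ln3_ge1 : 1 <= ln 3.
Proof. by rewrite -[1]ln_exp; apply: ln_le; [apply: exp_pos | apply: exp_le_3]. Qed.

Lemma nat_floor r : 0 <= r -> exists m : nat, r - 1 < INR m <= r.
Proof.
move=> r_ge0; have [lo hi] := archimed r.
have up_gt0 : (0 < up r)%Z by apply: lt_IZR; lra.
exists (Z.to_nat (up r - 1)); rewrite INR_IZR_INZ Z2Nat.id; last lia.
by rewrite minus_IZR /=; lra.
Qed.

Lemma p_le_2nlogn_small n : (6 < n <= 2047)%N -> INR (p n) <= 2 * INR n * ln (INR n).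
Proof.
move=> n_range; have := INR_leq _ _ (p_le_log2_small _ n_range).
rewrite !INR_muln; set j := trunc_log 2 n => le_pj.
have n_ge7 : 7 <= INR n by apply: (INR_IZR_leq 7); lia.
have j_ln : INR j * ln 2 <= ln (INR n).
  have := INR_leq _ _ (trunc_logP (isT : (1 < 2)%N) (_ : (0 < n)%N)).
  rewrite INR_expn -/j => /(_ ltac:(lia)) pow_le.
  change (INR 2) with 2 in pow_le.
  by rewrite -ln_pow; [apply: ln_le => //; apply: pow_lt|]; lra.
have ln2 := ln2_ge; have j_ge0 := pos_INR j; rewrite /= in le_pj.
have : INR n * INR j * (2 / 3) <= INR n * INR j * ln 2 by apply: Rmult_le_compat_l; nra.
have : INR n * (INR j * ln 2) <= INR n * ln (INR n) by apply: Rmult_le_compat_l; lra.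
lra.
Qed.

Lemma ln_central_bin_bound N x : 2048 <= N -> N * ln N - 1 < x <= N * ln N ->
  ln (2 * x + 1) + (N - 1) * ln (2 * x) < 2 * ln 2 * x.
Proof.
set L := ln N => N_ge x_range.
have l2 := ln2_ge; have l2_le1 : ln 2 <= 1 by have := ln_le_sub1 2; lra.
have L_ge : 11 * ln 2 <= L.
  by have := ln_le (2 ^ 11) N ltac:(lra) ltac:(simpl; lra); rewrite ln_pow -/L /=; lra.
have x_ge1 : 1 <= x by nra.
have ln_L : ln L <= 3 * ln 2 - 1 + L / 8.
  have ln8 : ln 8 = 3 * ln 2 by rewrite -[8](_ : 2 ^ 3 = 8) ?ln_pow /=; lra.
  by have := ln_le_sub1 (L / 8) ltac:(lra); rewrite ln_div; lra.
have ln_2x : ln (2 * x) <= ln 2 + L + ln L.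
  have := ln_le (2 * x) (2 * (N * L)) ltac:(lra) ltac:(lra).
  by rewrite [ln (2 * (N * L))]ln_mult ?ln_mult -/L; nra.
have ln_2x1 : ln (2 * x + 1) <= 1 / 2 + ln (2 * x).
  have := ln_le (2 * x + 1) (3 / 2 * (2 * x)) ltac:(lra) ltac:(lra).
  by rewrite ln_mult; try lra; have := ln_le_sub1 (3 / 2); lra.
(* With ln L bounded by its tangent at 8, the claim reduces to
   N * bracket > 1/2 + 2 ln 2. *)
have bracket : 3 / 100 <= (2 * ln 2 - 9 / 8) * L - 4 * ln 2 + 1.
  have : (2 * ln 2 - 9 / 8) * (11 * ln 2) <= (2 * ln 2 - 9 / 8) * L
    by apply: Rmult_le_compat_l; lra.
  nra.
have : N * (3 / 100) <= N * ((2 * ln 2 - 9 / 8) * L - 4 * ln 2 + 1)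
  by apply: Rmult_le_compat_l; lra.
have : (N - 1) * ln (2 * x) <= (N - 1) * (ln 2 + L + ln L)
  by apply: Rmult_le_compat_l; lra.
have : 2 * ln 2 * (N * L - 1) < 2 * ln 2 * x by apply: Rmult_lt_compat_l; lra.
have : N * ln L <= N * (3 * ln 2 - 1 + L / 8) by apply: Rmult_le_compat_l; lra.
lra.
Qed.

Lemma four_pow_gt_of_nlogn n m : (2048 <= n)%N ->
  INR n * ln (INR n) - 1 < INR m <= INR n * ln (INR n) ->
  (2 * INR m + 1) * (2 * INR m) ^ n.-1 < 4 ^ m.
Proof.
move=> n_ge m_range; have N_ge : 2048 <= INR n := INR_IZR_leq _ _ n_ge.
have L_ge1 : 1 <= ln (INR n) by apply: Rle_trans ln3_ge1 _; apply: ln_le; lra.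
have m_ge1 : 1 <= INR m by nra.
have ln4 : ln 4 = 2 * ln 2 by rewrite -[4](_ : 2 * 2 = 4) ?ln_mult; lra.
have n_pred : INR n.-1 = INR n - 1.
  by rewrite -[in RHS](prednK (_ : (0 < n)%N)) ?S_INR; [lra | lia].
have ln_bound := ln_central_bin_bound _ _ N_ge m_range.
apply: ln_lt_inv.
- by apply: Rmult_lt_0_compat; [|apply: pow_lt]; lra.
- by apply: pow_lt; lra.
rewrite ln_mult; [|lra|by apply: pow_lt; lra].
by rewrite !ln_pow ?n_pred ?ln4; lra.
Qed.

Lemma p_le_2nlogn_large n : (2048 <= n)%N -> INR (p n) <= 2 * INR n * ln (INR n).
Proof.
move=> n_ge; have N_ge3 : 3 <= INR n by apply: (INR_IZR_leq 3); lia.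
have L_ge1 : 1 <= ln (INR n) by apply: Rle_trans ln3_ge1 _; apply: ln_le; lra.
have [m m_range] := nat_floor (INR n * ln (INR n)) ltac:(nra).
have est := four_pow_gt_of_nlogn _ _ n_ge m_range.
have m_gt0 : (0 < m)%N by apply/ltP/INR_lt; rewrite /=; nra.
have count_gt : (n.-1 < count prime (iota 0 m.*2.+1))%N.
  rewrite ltnNge; apply/negP => le_count.
  have : (4 ^ m <= m.*2.+1 * m.*2 ^ n.-1)%N.
    apply: leq_trans (four_pow_le_prime_count _ m_gt0) _.
    by rewrite leq_mul2l leq_pexp2l ?double_gt0 ?orbT.
  move/INR_leq; rewrite INR_muln !INR_expn (S_INR m.*2) !INR_double.
  have four : INR 4 = 4 by rewrite INR_IZR_INZ.
  by rewrite four; lra.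
have := INR_leq _ _ (prime0_le_of_count _ _ count_gt).
by rewrite INR_double /p; lra.
Qed.

Lemma p_le_2nlogn n : (6 < n)%N -> INR (p n) <= 2 * INR n * ln (INR n).
Proof.
move=> n_gt6; have [n_le|n_gt] := leqP n 2047.
  by apply: p_le_2nlogn_small; rewrite n_gt6.
exact: p_le_2nlogn_large.
Qed.

(** * Power sums of primes and the functions A and B *)

Lemma pow_succ_sub_le a b n : 0 <= b <= a ->
  a ^ n.+1 - b ^ n.+1 <= INR n.+1 * a ^ n * (a - b).
Proof.
move=> [b_ge0 le_ba]; elim: n => [|n IH]; first by rewrite /=; lra.
have step : a ^ n.+2 - b ^ n.+2 = a * (a ^ n.+1 - b ^ n.+1) + b ^ n.+1 * (a - b).
  by rewrite /=; ring.
have : b ^ n.+1 <= a ^ n.+1 by apply: pow_incr.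
have : a * (a ^ n.+1 - b ^ n.+1) <= a * (INR n.+1 * a ^ n * (a - b)).
  by apply: Rmult_le_compat_l; lra.
rewrite step (S_INR n.+1) /=; nra.
Qed.

Lemma pow_succ_le_psum k M : INR M ^ k.+1 <= INR k.+1 * psum k M.
Proof.
elim: M => [|M IH]; first by rewrite /= !Rmult_0_l Rmult_0_r; lra.
change (psum k M.+1) with (psum k M + INR (p M.+1) ^ k).
have p_ge : INR M.+1 <= INR (p M.+1) by apply/INR_leq/ltnW/prime0_geq.
have := pow_succ_sub_le _ _ k (conj (pos_INR M) (INR_leq _ _ (leqnSn M))).
rewrite (_ : INR M.+1 - INR M = 1) ?Rmult_1_r; last by rewrite S_INR; ring.
have : INR k.+1 * INR M.+1 ^ k <= INR k.+1 * INR (p M.+1) ^ k.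
  apply: Rmult_le_compat_l; first exact: pos_INR.
  by apply: pow_incr; split; first exact: pos_INR.
lra.
Qed.

Lemma half_pow_lt_psum k M : (0 < M)%N -> (INR M / 2) ^ k.+1 < psum k M.
Proof.
move=> M_gt0; have M_pos : 0 < INR M by apply/lt_0_INR/ltP.
have k_lt : INR k.+1 < 2 ^ k.+1.
  by have := lt_INR _ _ (ltP (ltn_expl k.+1 (isT : (1 < 2)%N))); rewrite INR_expn.
have Mk_pos := pow_lt _ k.+1 M_pos.
have le_psum := pow_succ_le_psum k M.
have psum_pos : 0 < psum k M by have := pos_INR k.+1; nra.
have k_psum : INR k.+1 * psum k M < 2 ^ k.+1 * psum k M.
  exact: Rmult_lt_compat_r.
have two_pos : 0 < 2 ^ k.+1 by apply: pow_lt; lra.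
rewrite /Rdiv Rpow_mult_distr pow_inv.
apply: (Rmult_lt_reg_r (2 ^ k.+1)) => //.
rewrite Rmult_assoc Rinv_l ?Rmult_1_r; lra.
Qed.

Lemma psum_le_pow k M : psum k M <= INR M * INR (p M) ^ k.
Proof.
elim: M => [|M IH]; first by rewrite /=; lra.
change (psum k M.+1) with (psum k M + INR (p M.+1) ^ k); rewrite S_INR.
have p_pow_le : INR (p M) ^ k <= INR (p M.+1) ^ k.
  by apply: pow_incr; split; [apply: pos_INR | apply/INR_leq/prime0_leq/leq_pred].
have : INR M * INR (p M) ^ k <= INR M * INR (p M.+1) ^ k.
  by apply: Rmult_le_compat_l; first exact: pos_INR.
lra.
Qed.

Lemma psum_le_2nlogn k M : (6 < M)%N ->
  psum k M <= INR M * (2 * INR M * ln (INR M)) ^ k.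
Proof.
move=> M_gt6; apply: Rle_trans (psum_le_pow k M) _.
apply: Rmult_le_compat_l; first exact: pos_INR.
by apply: pow_incr; split; [apply: pos_INR | apply: p_le_2nlogn].
Qed.

Lemma A_gt0 y : 2 < y -> 0 < A y.
Proof.
by move=> y_gt2; apply: Rdiv_lt_0_compat; apply: ln_gt0; lra.
Qed.

Lemma A_mul_ln_le y0 y : 1 < y0 <= y -> A y0 * ln y <= ln (y / 2).
Proof.
move=> [y0_gt1 le_y0y]; have u_pos : 0 < ln y0 by apply: ln_gt0; lra.
have le_uv : ln y0 <= ln y by apply: ln_le; lra.
have l2_pos : 0 < ln 2 by have := ln_lt_2; lra.
rewrite /A !ln_div; try lra.
apply: (Rmult_le_reg_r (ln y0)) => //.
rewrite (_ : (ln y0 - ln 2) / ln y0 * ln y * ln y0 = (ln y0 - ln 2) * ln y);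
  last by field; lra.
nra.
Qed.

Lemma ln_succ_sub_le y0 y : 0 < y0 <= y -> ln (y + 1) - ln (y0 + 1) <= ln y - ln y0.
Proof.
move=> [y0_pos le_y0y].
have := ln_le ((y + 1) * y0) ((y0 + 1) * y) ltac:(nra) ltac:(nra).
by rewrite !ln_mult; lra.
Qed.

Lemma ln_succ_mul_ln_le y0 y : 1 <= y0 <= y -> ln (y + 1) * ln y0 <= ln (y0 + 1) * ln y.
Proof.
move=> [y0_ge1 le_y0y]; have := ln_succ_sub_le y0 y ltac:(lra).
have u_ge0 : 0 <= ln y0 by rewrite -ln_1; apply: ln_le; lra.
have le_uv : ln y0 <= ln y by apply: ln_le; lra.
have le_uL0 : ln y0 <= ln (y0 + 1) by apply: ln_le; lra.
nra.
Qed.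

Lemma ln_sq z : 0 < z -> ln (z ^ 2) = 2 * ln z.
Proof. by move=> z_pos; rewrite ln_pow. Qed.

Lemma ln_ln_sq_ge1 y : 5 <= y -> 1 <= ln (ln ((y + 1) ^ 2)).
Proof.
move=> y_ge5; apply: Rle_trans ln3_ge1 _; rewrite ln_sq; last lra.
apply: ln_le; first lra.
have : ln (2 * 3) <= ln (y + 1) by apply: ln_le; lra.
by rewrite ln_mult; try lra; have := ln2_ge; have := ln3_ge1; lra.
Qed.

Lemma ln_ln_sq_mul_ln_le y0 y : 5 <= y0 <= y ->
  ln (ln ((y + 1) ^ 2)) * ln y0 <= ln (ln ((y0 + 1) ^ 2)) * ln y.
Proof.
move=> [y0_ge5 le_y0y]; have c0_ge1 := ln_ln_sq_ge1 y0 y0_ge5.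
have dL := ln_succ_sub_le y0 y ltac:(lra).
rewrite !ln_sq in c0_ge1 *; try lra.
set u := ln y0 in dL *; set v := ln y in dL *.
set L0 := ln (y0 + 1) in dL c0_ge1 *; set L := ln (y + 1) in dL *.
have le_uv : u <= v by apply: ln_le; lra.
have le_uL0 : u <= L0 by apply: ln_le; lra.
have le_L0L : L0 <= L by apply: ln_le; lra.
have L0_pos : 0 < L0 by apply: ln_gt0; lra.
have c_sub : L0 * (ln (2 * L) - ln (2 * L0)) <= L - L0.
  rewrite -ln_div; try lra.
  rewrite (_ : 2 * L / (2 * L0) = L / L0); last by field; lra.
  have := ln_le_sub1 (L / L0) ltac:(apply: Rdiv_lt_0_compat; lra).
  move/(Rmult_le_compat_l L0).
  rewrite (_ : L0 * (L / L0 - 1) = L - L0); last by field; lra.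
  by apply; lra.
have c_ge : ln (2 * L0) <= ln (2 * L) by apply: ln_le; lra.
(* With c = ln (2 L) and c0 = ln (2 L0):
   c u <= c0 u + L0 (c - c0) <= c0 u + (v - u) <= c0 v. *)
have : 0 <= (ln (2 * L) - ln (2 * L0)) * (L0 - u) by apply: Rmult_le_pos; lra.
have : 0 <= (ln (2 * L0) - 1) * (v - u) by apply: Rmult_le_pos; lra.
nra.
Qed.

Lemma B_gt0 y k : 5 <= y -> 0 < B y k.
Proof.
move=> y_ge5; have u_pos : 0 < ln y by apply: ln_gt0; lra.
have L_pos : 0 < ln (y + 1) by apply: ln_gt0; lra.
have c_ge1 := ln_ln_sq_ge1 y y_ge5.
have k_frac : 0 <= INR k / (INR k + 1).
  by apply: Rle_mult_inv_pos; have := pos_INR k; lra.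
rewrite /B; apply: Rplus_lt_le_0_compat; first exact: Rdiv_lt_0_compat.
by apply: Rmult_le_pos => //; apply: Rle_mult_inv_pos; lra.
Qed.

Lemma ln_le_B_mul_ln y0 y k : 5 <= y0 <= y ->
  ln ((y + 1) * (2 * (y + 1) * ln (y + 1)) ^ k) <= (INR k + 1) * B y0 k * ln y.
Proof.
move=> [y0_ge5 le_y0y]; have u_pos : 0 < ln y0 by apply: ln_gt0; lra.
have L_pos : 0 < ln (y + 1) by apply: ln_gt0; lra.
have k_ge0 := pos_INR k.
have L_le := ln_succ_mul_ln_le y0 y ltac:(lra).
have c_le := ln_ln_sq_mul_ln_le y0 y ltac:(lra).
have ln_Q : ln (2 * (y + 1) * ln (y + 1)) = ln (ln ((y + 1) ^ 2)) + ln (y + 1).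
  rewrite ln_sq; last lra.
  by rewrite -ln_mult; [congr ln; ring | lra | nra].
rewrite ln_mult; [|lra|by apply: pow_lt; nra].
rewrite ln_pow ?ln_Q; last nra.
rewrite (_ : (INR k + 1) * B y0 k * ln y =
    ((INR k + 1) * (ln (y0 + 1) * ln y) +
     INR k * (ln (ln ((y0 + 1) ^ 2)) * ln y)) / ln y0);
  last by rewrite /B; field; lra.
apply/Rle_div_r => //.
have : INR k * (ln (ln ((y + 1) ^ 2)) * ln y0) <=
       INR k * (ln (ln ((y0 + 1) ^ 2)) * ln y).
  exact: Rmult_le_compat_l.
have : (INR k + 1) * (ln (y + 1) * ln y0) <= (INR k + 1) * (ln (y0 + 1) * ln y).
  by apply: Rmult_le_compat_l; lra.
nra.
Qed.

(* The statement below uses Peano's [<=] on [nat], which ssrnat shadows. *)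
Import Corelib.Init.Peano.
Local Open Scope R_scope.

Theorem lemma2p5 (k : nat) (x : R) (M0 M : nat) :
  (2 <= k)%nat -> 0 < x -> (6 <= M0)%nat ->
  psum k M <= x < psum k M + INR (p (S M)) ^ k ->
  (M0 <= M)%nat ->
  ln (INR M) < ln x / (INR k + 1) * / A (INR M0) /\
  ln (INR M) >= ln x / (INR k + 1) * / B (INR M0) k.
Proof.
(* The bounds hold for every [k]. *)
move=> _ x_pos /leP M0_ge6 [x_ge x_lt] /leP le_M0M.
have M0_ge : 6 <= INR M0 by apply: (INR_IZR_leq 6).
have M_ge : INR M0 <= INR M by apply: INR_leq.
have k1_pos : 0 < INR k + 1 by have := pos_INR k; lra.
split.
  have ln_x : (INR k + 1) * ln (INR M / 2) < ln x.
    rewrite -S_INR -ln_pow; last lra.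
    apply: ln_increasing; first by apply: pow_lt; lra.
    by apply: Rlt_le_trans x_ge; apply: half_pow_lt_psum; lia.
  have A_le := A_mul_ln_le (INR M0) (INR M) ltac:(lra).
  change (ln (INR M) < ln x / (INR k + 1) / A (INR M0)).
  have A_pos : 0 < A (INR M0) by apply: A_gt0; lra.
  have kA_le := Rmult_le_compat_l _ _ _ (Rlt_le _ _ k1_pos) A_le.
  by rewrite -!Rlt_div_r //; lra.
have x_le : x <= INR M.+1 * (2 * INR M.+1 * ln (INR M.+1)) ^ k.
  by apply: Rlt_le; apply: Rlt_le_trans x_lt (psum_le_2nlogn k M.+1 _); lia.
have := ln_le_B_mul_ln (INR M0) (INR M) k ltac:(lra).
rewrite -S_INR => B_ge; have ln_x := ln_le _ _ x_pos x_le.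
apply: Rle_ge; change (ln x / (INR k + 1) / B (INR M0) k <= ln (INR M)).
have B_pos : 0 < B (INR M0) k by apply: B_gt0; lra.
by rewrite !Rle_div_l //; lra.
Qed.
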